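(* Let $(X,G)$ and $(Y,H)$ be odometers (with $G,H$ countable groups). If $(X,G)$ and $(Y,H)$ are structurally conjugate, then they are continuously orbit equivalent.
   Context: $G$-odometer: for a decreasing sequence $G_0\supseteq G_1\supseteq\cdots$ of finite-index subgroups of $G$ (not necessarily normal), the inverse limit $\varprojlim(G/G_n,\pi_n)$ of left coset spaces under the natural maps $\pi_n:G/G_n\to G/G_{n-1}$, with $G$ acting by left multiplication coordinatewise; $\{G_n\}$ determines a system if the system is conjugate to this odometer. Structural conjugacy: there exist decreasing sequences of finite-index subgroups $\{G_n\}_{n\ge0}$ of $G$ and $\{H_n\}_{n\ge0}$ of $H$ determining $(X,G)$ and $(Y,H)$ respectively, and a group isomorphism $\theta:H_0\to G_0$ with $\theta(H_n)=G_n$ for all $n\ge0$ and $[G:G_0]=[H:H_0]<\infty$. Continuous orbit equivalence: a homeomorphism $\psi:X\to Y$ mapping $G$-orbits bijectively onto $H$-orbits, such that for every $x\in X$, $g\in G$ there are $h\in H$ and a clopen neighborhood $U$ of $x$ with $\psi(g\cdot z)=h\cdot\psi(z)$ for all $z\in U$, and symmetrically for $\psi^{-1}$. *)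

From Stdlib Require Import List Arith.
Set Implicit Arguments.
Unset Strict Implicit.

Record grp := Grp {
  gcar :> Type;
  gmul : gcar -> gcar -> gcar;
  ginv : gcar -> gcar;
  gone : gcar;
  gmulA : forall a b c, gmul a (gmul b c) = gmul (gmul a b) c;
  gmul1l : forall a, gmul gone a = a;
  gmul1r : forall a, gmul a gone = a;
  gmulVl : forall a, gmul (ginv a) a = gone;
  gmulVr : forall a, gmul a (ginv a) = gone
}.

Definition countable_grp (G : grp) : Prop :=
  exists f : nat -> G, forall g : G, exists n, f n = g.

Definition is_subgroup (G : grp) (K : G -> Prop) : Prop :=
  K (gone G) /\ (forall a b, K a -> K b -> K (gmul a b)) /\
  (forall a, K a -> K (ginv a)).

Definition is_lcoset (G : grp) (K : G -> Prop) (C : G -> Prop) : Prop :=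
  exists a : G, forall y, C y <-> exists k, K k /\ y = gmul a k.

Definition has_index (G : grp) (K : G -> Prop) (n : nat) : Prop :=
  exists reps : list G, length reps = n /\
    (forall g : G, exists r, In r reps /\ K (gmul (ginv r) g)) /\
    (forall i j d, i < n -> j < n ->
       K (gmul (ginv (nth i reps d)) (nth j reps d)) -> i = j).

Definition finite_index (G : grp) (K : G -> Prop) : Prop :=
  exists n, has_index K n.

Definition subgroup_chain (G : grp) (Gs : nat -> G -> Prop) : Prop :=
  (forall n, is_subgroup (Gs n)) /\ (forall n, finite_index (Gs n)) /\
  (forall n g, Gs (S n) g -> Gs n g).

(* a point is a compatible sequence of left cosets c n in G/G_n with
   pi_n (c (S n)) = c n, i.e. c (S n) included in c n *)
Definition odo_compat (G : grp) (Gs : nat -> G -> Prop) (c : nat -> G -> Prop)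
  : Prop :=
  forall n, is_lcoset (Gs n) (c n) /\ (forall y, c (S n) y -> c n y).

Definition odo (G : grp) (Gs : nat -> G -> Prop) : Type :=
  { c : nat -> G -> Prop | odo_compat Gs c }.

Definition coset_act (G : grp) (g : G) (C : G -> Prop) : G -> Prop :=
  fun y => exists c, C c /\ y = gmul g c.

Lemma coset_act_compat (G : grp) (Gs : nat -> G -> Prop) (g : G)
  (c : nat -> G -> Prop) :
  odo_compat Gs c -> odo_compat Gs (fun n => coset_act g (c n)).
Proof.
  intros H n. destruct (H n) as [[a Ha] Hinc]. split.
  - exists (gmul g a). intros y. unfold coset_act. split.
    + intros [c0 [Hc0 ->]]. apply Ha in Hc0. destruct Hc0 as [k [Hk ->]].
      exists k. split; [exact Hk| apply gmulA].
    + intros [k [Hk ->]]. exists (gmul a k). split.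
      * apply Ha. exists k. auto.
      * symmetry; apply gmulA.
  - intros y [c0 [Hc0 ->]]. exists c0. split; auto.
Qed.

Definition odo_act (G : grp) (Gs : nat -> G -> Prop) (g : G) (x : odo Gs)
  : odo Gs :=
  exist _ (fun n => coset_act g (proj1_sig x n))
        (coset_act_compat g (proj2_sig x)).

(* inverse-limit topology (product of discrete topologies): U is open iff
   it is a union of cylinders {y | y_n = x_n} *)
Definition odo_open (G : grp) (Gs : nat -> G -> Prop) (U : odo Gs -> Prop)
  : Prop :=
  forall x, U x -> exists n, forall y : odo Gs,
    (forall g, proj1_sig y n g <-> proj1_sig x n g) -> U y.

Record system (G : grp) := System {
  spc :> Type;
  is_open : (spc -> Prop) -> Prop;
  open_full : is_open (fun _ => True);
  open_union : forall (I : Type) (F : I -> spc -> Prop),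
      (forall i, is_open (F i)) -> is_open (fun x => exists i, F i x);
  open_inter : forall U V, is_open U -> is_open V ->
      is_open (fun x => U x /\ V x);
  act : G -> spc -> spc;
  act_one : forall x, act (gone G) x = x;
  act_mul : forall g h x, act (gmul g h) x = act g (act h x);
  act_cont : forall g U, is_open U -> is_open (fun x => U (act g x))
}.

Definition continuous_wrt (A B : Type) (openA : (A -> Prop) -> Prop)
  (openB : (B -> Prop) -> Prop) (f : A -> B) : Prop :=
  forall V, openB V -> openA (fun a => V (f a)).

Definition clopen (G : grp) (X : system G) (U : X -> Prop) : Prop :=
  is_open U /\ is_open (fun x => ~ U x).

Definition determines (G : grp) (X : system G) (Gs : nat -> G -> Prop) : Prop :=
  exists (phi : X -> odo Gs) (phi' : odo Gs -> X),
    (forall x, phi' (phi x) = x) /\ (forall y, phi (phi' y) = y) /\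
    continuous_wrt (@is_open G X) (@odo_open G Gs) phi /\
    continuous_wrt (@odo_open G Gs) (@is_open G X) phi' /\
    (forall g x, phi (@act _ X g x) = odo_act g (phi x)).

Definition is_odometer (G : grp) (X : system G) : Prop :=
  exists Gs, subgroup_chain Gs /\ determines X Gs.

Definition structurally_conjugate (G H : grp) (X : system G) (Y : system H)
  : Prop :=
  exists (Gs : nat -> G -> Prop) (Hs : nat -> H -> Prop) (theta : H -> G),
    subgroup_chain Gs /\ subgroup_chain Hs /\
    determines X Gs /\ determines Y Hs /\
    (forall h, Hs 0 h -> Gs 0 (theta h)) /\
    (forall a b, Hs 0 a -> Hs 0 b -> theta (gmul a b) = gmul (theta a) (theta b)) /\
    (forall a b, Hs 0 a -> Hs 0 b -> theta a = theta b -> a = b) /\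
    (forall g, Gs 0 g -> exists h, Hs 0 h /\ theta h = g) /\
    (forall n g, Gs n g <-> exists h, Hs n h /\ theta h = g) /\
    (exists k, has_index (Gs 0) k /\ has_index (Hs 0) k).

Definition locally_cocycle (G H : grp) (X : system G) (Y : system H)
  (psi : X -> Y) : Prop :=
  forall (x : X) (g : G), exists (h : H) (U : X -> Prop),
    clopen U /\ U x /\ forall z, U z -> psi (@act _ X g z) = @act _ Y h (psi z).

Definition continuously_orbit_equivalent (G H : grp) (X : system G)
  (Y : system H) : Prop :=
  exists (psi : X -> Y) (psi' : Y -> X),
    (forall x, psi' (psi x) = x) /\ (forall y, psi (psi' y) = y) /\
    continuous_wrt (@is_open G X) (@is_open H Y) psi /\
    continuous_wrt (@is_open H Y) (@is_open G X) psi' /\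
    (forall x x' : X, (exists g, x' = @act _ X g x) <->
                      (exists h, psi x' = @act _ Y h (psi x))) /\
    locally_cocycle psi /\ locally_cocycle psi'.

(** Since [[G:G_0] = [H:H_0]], transversals [r_i] of [G/G_0] and [s_i] of [H/H_0]
    can be indexed by the same [i < k].  A point of the [G]-odometer whose level-0
    coset is [r_i G_0] has level-n coset [r_i C_n], with [C_n] a coset of [G_n]
    inside [G_0]; send it to the point with level-n cosets [s_i theta^-1(C_n)].
    As [theta] carries [H_n] onto [G_n], this is a homeomorphism of odometers, and
    on the clopen cylinder where the level-0 coset is fixed, [g] acts on images as
    the single element [s_j theta^-1(r_j^-1 g r_i) s_i^-1], where
    [r_j G_0 = g r_i G_0].  Conjugating by the odometer models of [X] and [Y] gives
    the continuous orbit equivalence. *)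

From Stdlib Require Import List ClassicalEpsilon FunctionalExtensionality
  PropExtensionality ProofIrrelevance.
Set Implicit Arguments.
Unset Strict Implicit.

Lemma pred_ext (T : Type) (P Q : T -> Prop) : (forall x, P x <-> Q x) -> P = Q.
Proof.
  intro E. apply functional_extensionality; intro x.
  apply propositional_extensionality, E.
Qed.

Section GroupFacts.
Variable G : grp.
Implicit Types a b : G.

Lemma gmulKg a b : gmul (ginv a) (gmul a b) = b.
Proof. rewrite gmulA, gmulVl, gmul1l. reflexivity. Qed.

Lemma gmulKVg a b : gmul a (gmul (ginv a) b) = b.
Proof. rewrite gmulA, gmulVr, gmul1l. reflexivity. Qed.

Lemma ginv_unique a b : gmul a b = gone G -> ginv a = b.
Proof. intro E. rewrite <- (gmul1r (ginv a)), <- E, gmulKg. reflexivity. Qed.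

Lemma ginvM a b : ginv (gmul a b) = gmul (ginv b) (ginv a).
Proof.
  apply ginv_unique. rewrite <- gmulA, (gmulA b), gmulVr, gmul1l, gmulVr.
  reflexivity.
Qed.

Lemma ginvK a : ginv (ginv a) = a.
Proof. apply ginv_unique, gmulVl. Qed.

End GroupFacts.

Ltac gsimpl :=
  repeat progress rewrite ?ginvM, ?ginvK, <- ?gmulA, ?gmulVl, ?gmulVr, ?gmulKg,
    ?gmulKVg, ?gmul1l, ?gmul1r.

Lemma coset_actM (G : grp) (a b : G) (C : G -> Prop) :
  coset_act a (coset_act b C) = coset_act (gmul a b) C.
Proof.
  apply pred_ext; intro y; split.
  - intros [z [[c [Hc ->]] ->]]. exists c. split; [exact Hc | apply gmulA].
  - intros [c [Hc ->]]. exists (gmul b c). split; [exists c; auto | symmetry; apply gmulA].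
Qed.

Lemma coset_act1 (G : grp) (C : G -> Prop) : coset_act (gone G) C = C.
Proof.
  apply pred_ext; intro y; split.
  - intros [c [Hc ->]]. rewrite gmul1l. exact Hc.
  - intro Hy. exists y. rewrite gmul1l. auto.
Qed.

Lemma coset_act_sub (G : grp) (a : G) (C D : G -> Prop) :
  (forall y, C y -> D y) -> forall y, coset_act a C y -> coset_act a D y.
Proof. intros CD y [c [Hc ->]]. exists c. auto. Qed.

Lemma coset_act_mem (G : grp) (a c : G) (C : G -> Prop) : C c -> coset_act a C (gmul a c).
Proof. intro Hc. exists c. auto. Qed.

Section Cosets.
Variables (G : grp) (K : G -> Prop).

Lemma lcosetE C : is_lcoset K C <-> exists a, C = coset_act a K.
Proof.
  split; intros [a Ha]; exists a.
  - apply pred_ext; intro y. rewrite Ha. unfold coset_act.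
    split; intros [k [Hk ->]]; eauto.
  - intro y. rewrite Ha. unfold coset_act. split; intros [k [Hk ->]]; eauto.
Qed.

Lemma coset_act_lcoset a C : is_lcoset K C -> is_lcoset K (coset_act a C).
Proof.
  rewrite !lcosetE. intros [b ->]. exists (gmul a b). apply coset_actM.
Qed.

Hypothesis HK : is_subgroup K.

Lemma subgroup1 : K (gone G).
Proof. apply HK. Qed.

Lemma subgroupM a b : K a -> K b -> K (gmul a b).
Proof. apply HK. Qed.

Lemma subgroupV a : K a -> K (ginv a).
Proof. apply HK. Qed.

Lemma lcoset_act_mem a : coset_act a K a.
Proof. exists (gone G). split; [exact subgroup1 | now rewrite gmul1r]. Qed.

Lemma lcoset_rep C a : is_lcoset K C -> C a -> C = coset_act a K.
Proof.
  rewrite lcosetE. intros [b ->] [k [Hk ->]].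
  rewrite <- coset_actM. f_equal.
  apply pred_ext; intro y; split.
  - intro Hy. exists (gmul (ginv k) y).
    split; [apply subgroupM, Hy; apply subgroupV, Hk | now rewrite gmulKVg].
  - intros [c [Hc ->]]. apply subgroupM; auto.
Qed.

Lemma lcoset_diff C y z : is_lcoset K C -> C y -> C z -> K (gmul (ginv y) z).
Proof.
  intros HC Hy Hz. rewrite (lcoset_rep HC Hy) in Hz.
  destruct Hz as [k [Hk ->]]. now rewrite gmulKg.
Qed.

Lemma lcoset_eq C D a : is_lcoset K C -> is_lcoset K D -> C a -> D a -> C = D.
Proof. intros HC HD Ca Da. rewrite (lcoset_rep HC Ca), (lcoset_rep HD Da). reflexivity. Qed.

End Cosets.

(** * Transversals and the index of a coset *)

Definition transversal (G : grp) (K : G -> Prop) (k : nat) (reps : list G) : Prop :=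
  length reps = k /\ (forall g : G, exists r, In r reps /\ K (gmul (ginv r) g)) /\
  (forall i j d, i < k -> j < k ->
     K (gmul (ginv (nth i reps d)) (nth j reps d)) -> i = j).

Definition coset_index (G : grp) (reps : list G) (C : G -> Prop) : nat :=
  epsilon (inhabits 0) (fun i => i < length reps /\ C (nth i reps (gone G))).

Section Transversal.
Variables (G : grp) (K : G -> Prop) (k : nat) (reps : list G).
Hypotheses (HK : is_subgroup K) (Hreps : transversal K k reps).

Lemma coset_index_spec C : is_lcoset K C ->
  coset_index reps C < k /\ C (nth (coset_index reps C) reps (gone G)).
Proof.
  destruct Hreps as [Hlen [Hcover _]]. intros [a Ha].
  unfold coset_index. rewrite <- Hlen.
  apply (epsilon_spec (inhabits 0) (fun i => i < length reps /\ C (nth i reps (gone G)))).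
  destruct (Hcover a) as [r [Hr Hra]].
  destruct (In_nth reps r (gone G) Hr) as [i [Hi <-]].
  exists i. split; [exact Hi|]. apply Ha.
  exists (gmul (ginv a) (nth i reps (gone G))). split.
  - rewrite <- (ginvK (nth i reps (gone G))), <- ginvM. apply subgroupV; auto.
  - now rewrite gmulKVg.
Qed.

Lemma coset_index_unique C i : is_lcoset K C -> i < k -> C (nth i reps (gone G)) ->
  coset_index reps C = i.
Proof.
  intros HC Hi Ci. destruct (coset_index_spec HC) as [Hj Cj].
  apply (proj2 (proj2 Hreps) _ _ (gone G) Hj Hi).
  exact (lcoset_diff HK HC Cj Ci).
Qed.

End Transversal.

Section OdometerPoints.
Variables (G : grp) (Gs : nat -> G -> Prop).
Hypothesis HGs : subgroup_chain Gs.

Lemma chain_subgroup n : is_subgroup (Gs n).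
Proof. apply HGs. Qed.

Lemma chain_le m n g : m <= n -> Gs n g -> Gs m g.
Proof. destruct HGs as [_ [_ Hdown]]. intro Hmn. induction Hmn; auto. Qed.

Lemma odo_level_le c m n y : odo_compat Gs c -> m <= n -> c n y -> c m y.
Proof. intros Hc Hmn. induction Hmn; auto. intro Hy. apply IHHmn, (Hc m0), Hy. Qed.

Lemma odo_level0_eq c c' n : odo_compat Gs c -> odo_compat Gs c' -> c n = c' n ->
  c 0 = c' 0.
Proof.
  intros Hc Hc' E. destruct (proj1 (Hc n)) as [a Ha].
  assert (Hna : c n a) by (apply Ha, lcoset_act_mem, chain_subgroup).
  apply (lcoset_eq (chain_subgroup 0) (proj1 (Hc 0)) (proj1 (Hc' 0)) (a := a)).
  - apply (odo_level_le Hc (n := n)); [apply le_0_n | exact Hna].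
  - apply (odo_level_le Hc' (n := n)); [apply le_0_n | now rewrite <- E].
Qed.

Lemma odo_eq (x x' : odo Gs) : (forall n, proj1_sig x n = proj1_sig x' n) -> x = x'.
Proof.
  destruct x as [c Hc], x' as [c' Hc']. simpl. intro E.
  assert (c = c') as <- by (apply functional_extensionality, E).
  f_equal. apply proof_irrelevance.
Qed.

Lemma odo_cylinder_open n C : odo_open (fun x : odo Gs => proj1_sig x n = C).
Proof.
  intros x Hx. exists n. intros y Ey. rewrite <- Hx. apply pred_ext, Ey.
Qed.

Lemma odo_cylinder_compl_open n C : odo_open (fun x : odo Gs => proj1_sig x n <> C).
Proof.
  intros x Hx. exists n. intros y Ey. rewrite (pred_ext Ey). exact Hx.
Qed.

End OdometerPoints.

(* The graph of an isomorphism [G_0 -> H_0] carrying each [G_n] onto [H_n];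
   working with a relation makes the converse direction available for free. *)
Record level_iso (G H : grp) (Gs : nat -> G -> Prop) (Hs : nat -> H -> Prop)
    (R : G -> H -> Prop) : Prop := {
  liso_fun : forall g h h', R g h -> R g h' -> h = h';
  liso_inj : forall g g' h, R g h -> R g' h -> g = g';
  liso_tot : forall g, Gs 0 g -> exists h, R g h;
  liso_sur : forall h, Hs 0 h -> exists g, R g h;
  liso_mul : forall a b a' b', R a b -> R a' b' -> R (gmul a a') (gmul b b');
  liso_level : forall n g h, R g h -> (Gs n g <-> Hs n h) }.

Lemma level_iso_sym (G H : grp) Gs Hs (R : G -> H -> Prop) :
  level_iso Gs Hs R -> level_iso Hs Gs (fun h g => R g h).
Proof.
  intros []. constructor; eauto.
  intros n h g Hgh. symmetry; auto.
Qed.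

Definition rel_image (G H : grp) (R : G -> H -> Prop) (C : G -> Prop) : H -> Prop :=
  fun h => exists g, C g /\ R g h.

Lemma rel_image_sub (G H : grp) (R : G -> H -> Prop) (C D : G -> Prop) :
  (forall g, C g -> D g) -> forall h, rel_image R C h -> rel_image R D h.
Proof. intros CD h [g [Cg Rgh]]. exists g. auto. Qed.

Section LevelIso.
Variables (G H : grp) (Gs : nat -> G -> Prop) (Hs : nat -> H -> Prop) (R : G -> H -> Prop).
Hypotheses (HGs : subgroup_chain Gs) (HHs : subgroup_chain Hs) (HR : level_iso Gs Hs R).

Lemma rel_image_level n : rel_image R (Gs n) = Hs n.
Proof.
  apply pred_ext; intro h; split.
  - intros [g [Hg Rgh]]. exact (proj1 (liso_level HR n Rgh) Hg).
  - intro Hh. destruct (liso_sur HR (chain_le HHs (le_0_n n) Hh)) as [g Rgh].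
    exists g. split; [exact (proj2 (liso_level HR n Rgh) Hh) | exact Rgh].
Qed.

Lemma rel_image_act a b C : R a b -> (forall g, C g -> Gs 0 g) ->
  rel_image R (coset_act a C) = coset_act b (rel_image R C).
Proof.
  intros Rab CG. apply pred_ext; intro h; split.
  - intros [g [[c [Hc ->]] Rgh]]. destruct (liso_tot HR (CG c Hc)) as [h' Rch'].
    exists h'. split; [exists c; auto|].
    exact (liso_fun HR Rgh (liso_mul HR Rab Rch')).
  - intros [h' [[c [Hc Rch']] ->]]. exists (gmul a c).
    split; [exists c; auto | exact (liso_mul HR Rab Rch')].
Qed.

Lemma rel_image_lcoset n C : is_lcoset (Gs n) C -> (forall g, C g -> Gs 0 g) ->
  is_lcoset (Hs n) (rel_image R C).
Proof.
  intros HC CG. destruct (proj1 (lcosetE _ C) HC) as [a ->].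
  assert (Ha : Gs 0 a) by (apply CG, lcoset_act_mem, chain_subgroup, HGs).
  destruct (liso_tot HR Ha) as [b Rab].
  rewrite (rel_image_act Rab), rel_image_level.
  - apply lcosetE. now exists b.
  - intro g. apply chain_le, le_0_n. exact HGs.
Qed.

Lemma rel_imageK C : (forall g, C g -> Gs 0 g) ->
  rel_image (fun h g => R g h) (rel_image R C) = C.
Proof.
  intro CG. apply pred_ext; intro g; split.
  - intros [h [[g' [Cg' Rg'h]] Rgh]]. now rewrite (liso_inj HR Rgh Rg'h).
  - intro Cg. destruct (liso_tot HR (CG g Cg)) as [h Rgh].
    exists h. split; [exists g; auto | exact Rgh].
Qed.

End LevelIso.

(** * The odometer map induced by a level isomorphism *)

Definition odo_locally_cocycle (G H : grp) (Gs : nat -> G -> Prop) (Hs : nat -> H -> Prop)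
    (F : odo Gs -> odo Hs) : Prop :=
  forall (x : odo Gs) (g : G), exists h : H, forall x' : odo Gs,
    proj1_sig x' 0 = proj1_sig x 0 -> F (odo_act g x') = odo_act h (F x').

Section OdometerMap.
Variables (G H : grp) (Gs : nat -> G -> Prop) (Hs : nat -> H -> Prop) (R : G -> H -> Prop)
  (k : nat) (rG : list G) (rH : list H).
Hypotheses (HGs : subgroup_chain Gs) (HHs : subgroup_chain Hs) (HR : level_iso Gs Hs R)
  (HrG : transversal (Gs 0) k rG) (HrH : transversal (Hs 0) k rH).

Definition odo_map_levels (c : nat -> G -> Prop) (n : nat) : H -> Prop :=
  let i := coset_index rG (c 0) in
  coset_act (nth i rH (gone H)) (rel_image R (coset_act (ginv (nth i rG (gone G))) (c n))).

Lemma odo_level0_rep c : odo_compat Gs c ->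
  c 0 = coset_act (nth (coset_index rG (c 0)) rG (gone G)) (Gs 0).
Proof.
  intro Hc. apply (lcoset_rep (chain_subgroup HGs 0) (proj1 (Hc 0))).
  exact (proj2 (coset_index_spec (chain_subgroup HGs 0) HrG (proj1 (Hc 0)))).
Qed.

Lemma odo_normalized_level0 c : odo_compat Gs c ->
  coset_act (ginv (nth (coset_index rG (c 0)) rG (gone G))) (c 0) = Gs 0.
Proof.
  intro Hc. pose proof (odo_level0_rep Hc) as E.
  set (r := nth (coset_index rG (c 0)) rG (gone G)) in *.
  rewrite E, coset_actM, gmulVl. apply coset_act1.
Qed.

Lemma odo_normalized_sub c n g : odo_compat Gs c ->
  coset_act (ginv (nth (coset_index rG (c 0)) rG (gone G))) (c n) g -> Gs 0 g.
Proof.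
  intro Hc. rewrite <- (odo_normalized_level0 Hc).
  apply coset_act_sub. intro y. apply (odo_level_le Hc), le_0_n.
Qed.

Lemma odo_map_compat c : odo_compat Gs c -> odo_compat Hs (odo_map_levels c).
Proof.
  intros Hc n. unfold odo_map_levels. split.
  - apply coset_act_lcoset, (rel_image_lcoset HGs HHs HR).
    + apply coset_act_lcoset, Hc.
    + intro g. apply (odo_normalized_sub Hc).
  - apply coset_act_sub, rel_image_sub, coset_act_sub, Hc.
Qed.

Definition odo_map (x : odo Gs) : odo Hs :=
  exist _ (odo_map_levels (proj1_sig x)) (odo_map_compat (proj2_sig x)).

Lemma coset_index_odo_map c : odo_compat Gs c ->
  coset_index rH (odo_map_levels c 0) = coset_index rG (c 0).
Proof.
  intro Hc. unfold odo_map_levels.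
  rewrite (odo_normalized_level0 Hc), (rel_image_level HHs HR).
  apply (coset_index_unique (chain_subgroup HHs 0) HrH).
  - apply lcosetE. eauto.
  - exact (proj1 (coset_index_spec (chain_subgroup HGs 0) HrG (proj1 (Hc 0)))).
  - apply lcoset_act_mem, chain_subgroup, HHs.
Qed.

Lemma odo_map_continuous : continuous_wrt (@odo_open G Gs) (@odo_open H Hs) odo_map.
Proof.
  intros V HV [c Hc] Vx. destruct (HV _ Vx) as [n Hn]. exists n.
  intros [c' Hc'] E. apply Hn. simpl in *. apply pred_ext in E.
  unfold odo_map_levels. rewrite E, (odo_level0_eq HGs Hc' Hc E). tauto.
Qed.

Lemma odo_map_locally_cocycle : odo_locally_cocycle odo_map.
Proof.
  intros x g. destruct x as [c Hc]. simpl.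
  set (i := coset_index rG (c 0)). set (j := coset_index rG (coset_act g (c 0))).
  set (ri := nth i rG (gone G)). set (rj := nth j rG (gone G)).
  set (si := nth i rH (gone H)). set (sj := nth j rH (gone H)).
  assert (Hri : c 0 ri)
    by exact (proj2 (coset_index_spec (chain_subgroup HGs 0) HrG (proj1 (Hc 0)))).
  assert (Hrj : coset_act g (c 0) rj).
  { apply (coset_index_spec (chain_subgroup HGs 0) HrG), coset_act_lcoset, Hc. }
  assert (Hgap : Gs 0 (gmul (ginv rj) (gmul g ri))).
  { apply (lcoset_diff (chain_subgroup HGs 0) (coset_act_lcoset g (proj1 (Hc 0)))).
    - exact Hrj.
    - now apply coset_act_mem. }
  destruct (liso_tot HR Hgap) as [b Rb].
  exists (gmul sj (gmul b (ginv si))).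
  intros [c' Hc'] E. simpl in E. apply odo_eq. intro n. simpl. unfold odo_map_levels.
  rewrite E. fold i j ri rj si sj.
  rewrite !coset_actM.
  replace (gmul (ginv rj) g) with (gmul (gmul (ginv rj) (gmul g ri)) (ginv ri))
    by (gsimpl; reflexivity).
  rewrite <- coset_actM, (rel_image_act HR Rb), coset_actM.
  - f_equal. gsimpl. reflexivity.
  - intro y. unfold ri, i. rewrite <- E. apply (odo_normalized_sub Hc').
Qed.

End OdometerMap.

Lemma odo_mapK (G H : grp) Gs Hs (R : G -> H -> Prop) k rG rH
  (HGs : subgroup_chain Gs) (HHs : subgroup_chain Hs) (HR : level_iso Gs Hs R)
  (HR' : level_iso Hs Gs (fun h g => R g h))
  (HrG : transversal (Gs 0) k rG) (HrH : transversal (Hs 0) k rH) (x : odo Gs) :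
  odo_map rG HHs HGs HR' HrH (odo_map rH HGs HHs HR HrG x) = x.
Proof.
  apply odo_eq. destruct x as [c Hc]. intro n. simpl.
  unfold odo_map_levels at 1. rewrite (coset_index_odo_map HGs HHs HR HrG HrH Hc).
  unfold odo_map_levels.
  rewrite coset_actM, gmulVl, coset_act1, (rel_imageK HR), coset_actM, gmulVr.
  - apply coset_act1.
  - intro g. apply (odo_normalized_sub HGs HrG Hc).
Qed.

(** * Transport to conjugate systems *)

Section Transport.
Variables (G H : grp) (X : system G) (Y : system H)
  (Gs : nat -> G -> Prop) (Hs : nat -> H -> Prop)
  (phiX : X -> odo Gs) (phiY : Y -> odo Hs) (phiY' : odo Hs -> Y) (F : odo Gs -> odo Hs).
Hypotheses (cX : continuous_wrt (@is_open G X) (@odo_open G Gs) phiX)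
  (aX : forall g x, phiX (act g x) = odo_act g (phiX x))
  (cY' : continuous_wrt (@odo_open H Hs) (@is_open H Y) phiY')
  (aY : forall h y, phiY (act h y) = odo_act h (phiY y))
  (phiYK : forall y, phiY' (phiY y) = y) (phiY'K : forall y, phiY (phiY' y) = y).

Lemma transport_continuous :
  continuous_wrt (@odo_open G Gs) (@odo_open H Hs) F ->
  continuous_wrt (@is_open G X) (@is_open H Y) (fun x => phiY' (F (phiX x))).
Proof. intros cF V HV. exact (cX (cF _ (cY' HV))). Qed.

Lemma transport_locally_cocycle :
  odo_locally_cocycle F -> locally_cocycle (fun x => phiY' (F (phiX x))).
Proof.
  intros HF x g. destruct (HF (phiX x) g) as [h Hh].
  exists h, (fun z => proj1_sig (phiX z) 0 = proj1_sig (phiX x) 0). split; [split|split].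
  - exact (cX (@odo_cylinder_open _ _ 0 _)).
  - exact (cX (@odo_cylinder_compl_open _ _ 0 _)).
  - reflexivity.
  - intros z Uz. rewrite aX, (Hh _ Uz), <- (phiY'K (F (phiX z))) at 1.
    rewrite <- aY. apply phiYK.
Qed.

End Transport.

Lemma coe_of_locally_cocycle (G H : grp) (X : system G) (Y : system H)
  (psi : X -> Y) (psi' : Y -> X) :
  (forall x, psi' (psi x) = x) -> (forall y, psi (psi' y) = y) ->
  continuous_wrt (@is_open G X) (@is_open H Y) psi ->
  continuous_wrt (@is_open H Y) (@is_open G X) psi' ->
  locally_cocycle psi -> locally_cocycle psi' ->
  continuously_orbit_equivalent X Y.
Proof.
  intros psiK psi'K cpsi cpsi' Lpsi Lpsi'. exists psi, psi'.
  do 4 (split; [assumption|]). split; [|split; assumption].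
  intros x x'. split.
  - intros [g ->]. destruct (Lpsi x g) as [h [U [_ [Ux HU]]]]. exists h. auto.
  - intros [h Eh]. destruct (Lpsi' (psi x) h) as [g [U [_ [Ux HU]]]].
    exists g. rewrite <- (psiK x'), Eh, (HU _ Ux), psiK. reflexivity.
Qed.

Lemma odometer_coe (G H : grp) (X : system G) (Y : system H)
  (Gs : nat -> G -> Prop) (Hs : nat -> H -> Prop)
  (F : odo Gs -> odo Hs) (F' : odo Hs -> odo Gs) :
  determines X Gs -> determines Y Hs ->
  (forall x, F' (F x) = x) -> (forall y, F (F' y) = y) ->
  continuous_wrt (@odo_open G Gs) (@odo_open H Hs) F ->
  continuous_wrt (@odo_open H Hs) (@odo_open G Gs) F' ->
  odo_locally_cocycle F -> odo_locally_cocycle F' ->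
  continuously_orbit_equivalent X Y.
Proof.
  intros [pX [pX' [pXK [pX'K [cX [cX' aX]]]]]] [pY [pY' [pYK [pY'K [cY [cY' aY]]]]]]
    FK F'K cF cF' LF LF'.
  apply (coe_of_locally_cocycle (psi := fun x => pY' (F (pX x)))
                                (psi' := fun y => pX' (F' (pY y)))).
  - intro x. rewrite pY'K, FK. apply pXK.
  - intro y. rewrite pX'K, F'K. apply pYK.
  - exact (transport_continuous cX cY' cF).
  - exact (transport_continuous cY cX' cF').
  - exact (transport_locally_cocycle cX aX aY pYK pY'K LF).
  - exact (transport_locally_cocycle cY aY aX pXK pX'K LF').
Qed.

Lemma structural_level_iso (G H : grp) (Gs : nat -> G -> Prop) (Hs : nat -> H -> Prop)
  (theta : H -> G) :
  subgroup_chain Hs ->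
  (forall a b, Hs 0 a -> Hs 0 b -> theta (gmul a b) = gmul (theta a) (theta b)) ->
  (forall a b, Hs 0 a -> Hs 0 b -> theta a = theta b -> a = b) ->
  (forall g, Gs 0 g -> exists h, Hs 0 h /\ theta h = g) ->
  (forall n g, Gs n g <-> exists h, Hs n h /\ theta h = g) ->
  level_iso Gs Hs (fun g h => Hs 0 h /\ theta h = g).
Proof.
  intros HHs Tmul Tinj Tsur Tlev. constructor.
  - intros g h h' [Hh <-] [Hh' E]. apply Tinj; auto.
  - intros g g' h [_ <-] [_ <-]. reflexivity.
  - exact Tsur.
  - intros h Hh. exists (theta h). auto.
  - intros a b a' b' [Hb <-] [Hb' <-].
    split; [apply (subgroupM (chain_subgroup HHs 0)) | apply Tmul]; auto.
  - intros n g h [Hh <-]. rewrite Tlev. split.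
    + intros [h' [Hh' E]]. rewrite (Tinj h' h) in Hh'; auto.
      exact (chain_le HHs (le_0_n n) Hh').
    + eauto.
Qed.

Theorem theorem3p3 (G H : grp) (X : system G) (Y : system H) :
  countable_grp G -> countable_grp H ->
  is_odometer X -> is_odometer Y ->
  structurally_conjugate X Y ->
  continuously_orbit_equivalent X Y.
Proof.
  intros _ _ _ _ [Gs [Hs [theta [HGs [HHs [DX [DY
    [_ [Tmul [Tinj [Tsur [Tlev [k [[rG HrG] [rH HrH]]]]]]]]]]]]]]].
  pose proof (structural_level_iso HHs Tmul Tinj Tsur Tlev) as HR.
  pose proof (level_iso_sym HR) as HR'.
  apply (odometer_coe DX DY (F := odo_map rH HGs HHs HR HrG)
                            (F' := odo_map rG HHs HGs HR' HrH)).
  - exact (odo_mapK HGs HHs HR HR' HrG HrH).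
  - exact (odo_mapK HHs HGs HR' HR HrH HrG).
  - apply odo_map_continuous.
  - apply odo_map_continuous.
  - apply odo_map_locally_cocycle.
  - apply odo_map_locally_cocycle.
Qed.
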